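(* Let $X$ be a nonempty compact Hausdorff space and $T\in M(X,X)$. Then there exists a nonempty subset $A\subset X$ with $T(A)=A$.
   Context: A continuous multivalued map $X\to Y$ is a subset $T\subset X\times Y$ such that the restriction of the projection $X\times Y\to X$ to $T$ is proper (universally closed; equivalently closed with compact fibers), surjective and has finite fibers; $M(X,Y)$ is the set of these. For $A\subset X$, $T(A)$ denotes the image of $T\cap(A\times X)$ under the projection to the second factor; a subset $A$ with $T(A)=A$ is called a fixed subset. *)

From HB Require Import structures.
From mathcomp Require Import all_boot all_order.
From mathcomp Require Import all_classical all_reals all_analysis.
Set Implicit Arguments. Unset Strict Implicit. Unset Printing Implicit Defensive.
Local Open Scope classical_set_scope.

(* A continuous multivalued map X -> Y: a subset T of X * Y such that the
   projection T -> X (restriction of fst) is proper (closed, with compact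
   fibers), surjective and has finite fibers. *)
Definition multimap (X Y : topologicalType) (T : set (X * Y)) : Prop :=
  (forall F : set (X * Y), closed F -> closed (fst @` (T `&` F))) /\
  (forall x : X, compact (T `&` [set p | p.1 = x])) /\
  (forall x : X, exists y : Y, T (x, y)) /\
  (forall x : X, finite_set [set y : Y | T (x, y)]).

Definition mimage (X Y : topologicalType) (T : set (X * Y)) (A : set X) : set Y :=
  snd @` (T `&` [set p | A p.1]).

From HB Require Import structures.
From mathcomp Require Import all_boot all_order.
From mathcomp Require Import all_classical all_reals all_analysis.
Local Open Scope classical_set_scope.

(* By Zorn's lemma and compactness there is a minimal nonempty closed set A
   with T(A) included in A.  Since the graph of T is closed and X is compact
   Hausdorff, T(A) is again closed, nonempty (T is surjective) and satisfies
   T(T(A)) included in T(A); minimality forces T(A) = A. *)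

Lemma Zorn_bigcap (T : Type) (P : set (set T)) :
    (forall F : set (set T), F `<=` P -> total_on F subset ->
      P (\bigcap_(X in F) X)) ->
  exists A, P A /\ forall B, B `<` A -> ~ P B.
Proof.
move=> chainP.
have [C [PC Cmax]] : exists C, P (~` C) /\ forall B, C `<` B -> ~ P (~` B).
  apply: (@Zorn_bigcup _ [set C | P (~` C)]) => F FP Ftot.
  rewrite /= setC_bigcup.
  have -> : \bigcap_(i in F) ~` i = \bigcap_(X in setC @` F) X.
    apply/seteqP; split=> [x Fx _ [C FC <-]|x Fx C FC]; first exact: Fx.
    by apply: Fx; exists C.
  apply: chainP => [_ [C FC <-]|_ _ [C FC <-] [D FD <-]]; first exact: FP.
  have [CD|DC] := Ftot _ _ FC FD; [right; exact: (subsetC CD)|].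
  by left; exact: (subsetC DC).
exists (~` C); split=> // B [BC CB] PB; apply: (Cmax (~` B)); last by rewrite setCK.
split=> [x Cx Bx|nBC]; first exact: BC Bx Cx.
by apply: CB; rewrite -setCS setCK.
Qed.

Lemma compact_chain_bigcap_neq0 (X : topologicalType) (F : set (set X)) :
  compact [set: X] -> [set: X] !=set0 ->
  (forall A, F A -> closed A /\ A !=set0) -> total_on F subset ->
  \bigcap_(A in F) A !=set0.
Proof.
move=> cX [x0 _] FP Ftot.
have [[A0 FA0]|F0] := pselect (F !=set0); last first.
  by exists x0 => A FA; exfalso; apply: F0; exists A.
pose G := filter_from F id.
have GF : Filter G.
  apply: filter_from_filter => [|A B FA FB]; first by exists A0.
  have [AB|BA] := Ftot _ _ FA FB; [exists A | exists B] => // x Bx; split=> //.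
  - exact: AB.
  - exact: BA.
have PG : ProperFilter G by apply: filter_from_proper => A /FP[].
have [p [_ Gp]] := cX G PG (ex_intro2 _ _ A0 FA0 (fun _ _ => I)).
exists p => A FA; rewrite (closure_id A).1; last exact: (FP A FA).1.
by move: Gp; rewrite clusterE; apply; exists A.
Qed.

Section MultivaluedMaps.
Context {X Y : topologicalType} {T : set (X * Y)}.

Lemma mimage_subset {A B : set X} : A `<=` B -> mimage T A `<=` mimage T B.
Proof. by move=> AB _ [p [Tp Ap] <-]; exists p => //; split=> //; exact: AB. Qed.

Lemma mimage_neq0 (A : set X) :
  (forall x, exists y, T (x, y)) -> A !=set0 -> mimage T A !=set0.
Proof. by move=> Tsurj [x Ax]; have [y Txy] := Tsurj x; exists y, (x, y). Qed.

Lemma closed_fst_preimage {B : set X} : closed B -> closed (@fst X Y @^-1` B).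
Proof. by apply: preimage_closed => p _; exact: cvg_fst. Qed.

Lemma closed_snd_preimage {B : set Y} : closed B -> closed (@snd X Y @^-1` B).
Proof. by apply: preimage_closed => p _; exact: cvg_snd. Qed.

Lemma multimap_closed : hausdorff_space Y -> multimap T -> closed T.
Proof.
move=> hY [Tproper [Tfiber _]] [x y] clTxy.
(* By properness every neighbourhood of y meets, up to closure, the compact
   fibre over x; a cluster point (x, b) of these traces then lies in the
   closure of every neighbourhood of y, so b = y. *)
have fiber_meets U : nbhs y U -> exists2 z, T (x, z) & closure U z.
  move=> yU; pose S := fst @` (T `&` snd @^-1` closure U).
  have : closure S x.
    move=> N xN; have xyNU : nbhs (x, y) (N `*` U) by exists (N, U).
    have [[a b] [Tab [Na Ub]]] := clTxy _ xyNU.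
    by exists a; split=> //; exists (a, b) => //; split=> //; exact: subset_closure.
  rewrite -(closure_id S).1; last first.
    exact: Tproper (closed_snd_preimage (@closed_closure _ U)).
  by case=> -[a z] [Tz Uz] /= ax; exists z; first rewrite -ax.
pose K := T `&` [set p | p.1 = x].
pose G := filter_from (nbhs y) (fun U => K `&` snd @^-1` closure U).
have GF : Filter G.
  apply: filter_from_filter => [|U V yU yV]; first by exists setT; exact: filterT.
  exists (U `&` V); first exact: filterI.
  by move=> p [Kp UVp]; split; split=> //; apply: closureS UVp => ? [].
have PG : ProperFilter G.
  apply: filter_from_proper => U /fiber_meets[z Tz Uz]; by exists (x, z).
have GK : G K by exists setT; [exact: filterT | move=> p []].
have [[a b] [[Tab /= ax] Gab]] := Tfiber x G PG GK.
rewrite ax in Tab; suff -> : y = b by [].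
apply: hY; rewrite clusterE => U yU.
have clKU : closure (snd @^-1` closure U) (a, b).
  have GKU : G (K `&` snd @^-1` closure U) by exists U.
  move: Gab; rewrite clusterE => /(_ _ GKU); apply: closureS; exact: subIsetr.
rewrite -(closure_id _).1 in clKU => //.
exact/closed_snd_preimage/(@closed_closure _ U).
Qed.

Lemma mimage_closed (B : set X) :
  compact [set: X] -> compact [set: Y] -> hausdorff_space Y ->
  closed T -> closed B -> closed (mimage T B).
Proof.
move=> cX cY hY cT cB; apply: compact_closed => //.
apply: continuous_compact.
  by apply: continuous_subspaceT => p; exact: cvg_snd.
apply: (@subclosed_compact _ _ setT).
- exact: closedI cT (closed_fst_preimage cB).
- by rewrite -setXTT; exact: compact_setX.
- exact: subsetT.
Qed.

End MultivaluedMaps.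

Theorem mainTheorem14 (X : topologicalType) (T : set (X * X)) :
  [set: X] !=set0 -> hausdorff_space X -> compact [set: X] ->
  multimap T ->
  exists A : set X, A !=set0 /\ mimage T A = A.
Proof.
move=> X0 hX cX hT; have [_ [_ [Tsurj _]]] := hT.
have cT := multimap_closed hX hT.
pose P := [set A : set X | [/\ closed A, A !=set0 & mimage T A `<=` A]].
have [A [[cA A0 TA] Amin]] : exists A, P A /\ forall B, B `<` A -> ~ P B.
  apply: Zorn_bigcap => F FP Ftot; split.
  - by apply: closed_bigI => A /FP[].
  - by apply: compact_chain_bigcap_neq0 => // A /FP[].
  - move=> y Ty A FA; have [_ _ TA] := FP A FA.
    have FA_A : \bigcap_(B in F) B `<=` A by move=> x; apply.
    exact: (TA _ (mimage_subset FA_A _ Ty)).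
have PTA : P (mimage T A).
  split; [exact: mimage_closed | exact: mimage_neq0 Tsurj A0 | exact: mimage_subset].
exists A; split=> //; apply/seteqP; split=> //.
by apply: contrapT => ATA; apply: (Amin _ _ PTA).
Qed.
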